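(* Let $v_1,\dots,v_n:[0,1]\to\mathbb R_{\ge0}$ be monotone non-decreasing subadditive valuations with budgets $B_i>0$, let $\bar v_i(y)=\min\{v_i(y),B_i\}$, let $r_1=\arg\max_i\bar v_i(\frac12)$, and let $\bar W^\dagger=\sup\{\bar W(y): y\in\mathbb R^n_{\ge0},\ y_{r_1}=0,\ \sum_{i\ne r_1}y_i=\frac12\}$. Then $\bar v_{r_1}(\frac12)+\bar W^\dagger\ge\frac12\bar W^*$.
   Context: Liquid welfare of an allocation $y\in\mathbb R^n_{\ge0}$: $\bar W(y)=\sum_i\min\{v_i(y_i),B_i\}$; $\bar W^*=\sup\{\bar W(y):y\in\mathbb R^n_{\ge0},\sum_iy_i=1\}$. Subadditive means $v_i(a+b)\le v_i(a)+v_i(b)$ whenever $a,b,a+b\in[0,1]$. *)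

From Stdlib Require Import Reals Lra List.
Import ListNotations.
Open Scope R_scope.

Definition sumR (n : nat) (f : nat -> R) : R :=
  fold_right Rplus 0 (map f (seq 0 n)).

Definition vbar (v : nat -> R -> R) (B : nat -> R) (i : nat) (x : R) : R :=
  Rmin (v i x) (B i).

Definition Wbar (n : nat) (v : nat -> R -> R) (B : nat -> R) (y : nat -> R) : R :=
  sumR n (fun i => vbar v B i (y i)).

Definition nonneg_alloc (n : nat) (y : nat -> R) : Prop :=
  forall i, (i < n)%nat -> 0 <= y i.

Definition Wstar_set (n : nat) (v : nat -> R -> R) (B : nat -> R) (w : R) : Prop :=
  exists y, nonneg_alloc n y /\ sumR n y = 1 /\ w = Wbar n v B y.

Definition Wdagger_set (n : nat) (v : nat -> R -> R) (B : nat -> R) (r : nat) (w : R) : Prop :=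
  exists y, nonneg_alloc n y /\ y r = 0 /\
    sumR n (fun i => if Nat.eqb i r then 0 else y i) = 1/2 /\
    w = Wbar n v B y.

Definition monotone01 (f : R -> R) : Prop :=
  forall a b, 0 <= a -> a <= b -> b <= 1 -> f a <= f b.

Definition subadditive01 (f : R -> R) : Prop :=
  forall a b, 0 <= a <= 1 -> 0 <= b <= 1 -> 0 <= a + b <= 1 -> f (a + b) <= f a + f b.

From Stdlib Require Import Reals Lra Lia List.
Open Scope R_scope.

(* Take any feasible allocation y (y >= 0, sum y = 1) and an index
   j <> r1.  Halve every share, give agent r1's halved share to j, and set
   the share of r1 to 0.  This gives z with z_{r1} = 0,
   sum_{i<>r1} z_i = 1/2 and z_i >= y_i / 2, so z is admissible for W^dagger.
   For a monotone subadditive v capped at B >= 0 we have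
   vbar(a) <= 2 vbar(a/2) <= 2 vbar(b) whenever a/2 <= b.  Applied to each
   i <> r1 this gives sum_{i<>r1} vbar_i(y_i) <= 2 W(z) <= 2 W^dagger.  Applied
   to r1 with b = 1/2 it gives vbar_{r1}(y_{r1}) <= 2 vbar_{r1}(1/2).  Hence
   W(y) <= 2 (vbar_{r1}(1/2) + W^dagger), and taking the supremum over y
   proves the claim.
   An index j <> r1 exists because W^dagger is a least upper bound, so its
   defining set is nonempty. *)

Lemma fold_right_Rplus_init (c : R) (l : list R) :
  fold_right Rplus c l = c + fold_right Rplus 0 l.
Proof. induction l as [|a l IH]; simpl; [lra | rewrite IH; lra]. Qed.

Lemma sumR_0 (f : nat -> R) : sumR 0 f = 0.
Proof. reflexivity. Qed.

Lemma sumR_S (n : nat) (f : nat -> R) : sumR (S n) f = sumR n f + f n.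
Proof.
  unfold sumR. rewrite seq_S, map_app, fold_right_app. simpl.
  rewrite fold_right_Rplus_init. lra.
Qed.

Lemma sumR_le (n : nat) (f g : nat -> R) :
  (forall i, (i < n)%nat -> f i <= g i) -> sumR n f <= sumR n g.
Proof.
  induction n as [|n IH]; intros H; [rewrite !sumR_0; lra|].
  rewrite !sumR_S.
  assert (f n <= g n) by (apply H; lia).
  assert (sumR n f <= sumR n g) by (apply IH; intros; apply H; lia).
  lra.
Qed.

Lemma sumR_ext (n : nat) (f g : nat -> R) :
  (forall i, (i < n)%nat -> f i = g i) -> sumR n f = sumR n g.
Proof.
  intros H; apply Rle_antisym; apply sumR_le; intros i Hi; rewrite H; auto; lra.
Qed.

Lemma sumR_plus (n : nat) (f g : nat -> R) :
  sumR n (fun i => f i + g i) = sumR n f + sumR n g.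
Proof. induction n; [rewrite !sumR_0; lra | rewrite !sumR_S, IHn; lra]. Qed.

Lemma sumR_scal (n : nat) (c : R) (f : nat -> R) :
  sumR n (fun i => c * f i) = c * sumR n f.
Proof. induction n; [rewrite !sumR_0; lra | rewrite !sumR_S, IHn; lra]. Qed.

Lemma sumR_nonneg (n : nat) (f : nat -> R) :
  (forall i, (i < n)%nat -> 0 <= f i) -> 0 <= sumR n f.
Proof.
  intros H. rewrite <- (Rmult_0_l (sumR n f)), <- sumR_scal.
  apply sumR_le. intros i Hi. rewrite Rmult_0_l. auto.
Qed.

Lemma sumR_indicator (n k : nat) (c : R) :
  (k < n)%nat -> sumR n (fun i => if Nat.eqb i k then c else 0) = c.
Proof.
  induction n as [|n IH]; intros Hk; [lia|]. rewrite sumR_S.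
  destruct (Nat.eqb_spec n k) as [-> | Hnk].
  - rewrite (sumR_ext k _ (fun i => 0 * 0)), sumR_scal; [lra|].
    intros i Hi. destruct (Nat.eqb_spec i k); [lia | lra].
  - rewrite IH by lia. lra.
Qed.

Lemma sumR_split (n k : nat) (f : nat -> R) : (k < n)%nat ->
  sumR n f = f k + sumR n (fun i => if Nat.eqb i k then 0 else f i).
Proof.
  intros Hk.
  rewrite (sumR_ext n f (fun i => (if Nat.eqb i k then f k else 0)
                                  + (if Nat.eqb i k then 0 else f i))).
  - rewrite sumR_plus, sumR_indicator by exact Hk. reflexivity.
  - intros i _. destruct (Nat.eqb_spec i k); subst; lra.
Qed.

Lemma sumR_term_le (n k : nat) (f : nat -> R) :
  (forall i, (i < n)%nat -> 0 <= f i) -> (k < n)%nat -> f k <= sumR n f.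
Proof.
  intros Hf Hk. rewrite (sumR_split n k f Hk).
  assert (0 <= sumR n (fun i => if Nat.eqb i k then 0 else f i)); [|lra].
  apply sumR_nonneg. intros i Hi. destruct (Nat.eqb i k); [lra | auto].
Qed.

Lemma sumR_nonzero_term (n : nat) (f : nat -> R) :
  sumR n f <> 0 -> exists j, (j < n)%nat /\ f j <> 0.
Proof.
  induction n as [|n IH]; intros H; [rewrite sumR_0 in H; lra|].
  rewrite sumR_S in H.
  destruct (Req_dec (f n) 0) as [Hz | Hnz].
  - destruct IH as [j [Hj Hfj]]; [lra|]. exists j; split; [lia | exact Hfj].
  - exists n; split; [lia | exact Hnz].
Qed.

Lemma cap_monotone (f : R -> R) (c a b : R) :
  monotone01 f -> 0 <= a -> a <= b -> b <= 1 -> Rmin (f a) c <= Rmin (f b) c.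
Proof.
  intros Hm Ha Hab Hb. pose proof (Hm a b Ha Hab Hb).
  unfold Rmin. destruct (Rle_dec (f a) c), (Rle_dec (f b) c); lra.
Qed.

Lemma cap_halving (f : R -> R) (c x : R) :
  subadditive01 f -> 0 <= c -> 0 <= x <= 1 -> Rmin (f x) c <= 2 * Rmin (f (x / 2)) c.
Proof.
  intros Hs Hc Hx.
  assert (f x <= f (x / 2) + f (x / 2)).
  { replace x with (x / 2 + x / 2) at 1 by field. apply Hs; lra. }
  unfold Rmin. destruct (Rle_dec (f x) c), (Rle_dec (f (x / 2)) c); lra.
Qed.

Lemma cap_double_bound (f : R -> R) (c a b : R) :
  monotone01 f -> subadditive01 f -> 0 <= c ->
  0 <= a <= 1 -> a / 2 <= b <= 1 -> Rmin (f a) c <= 2 * Rmin (f b) c.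
Proof.
  intros Hm Hs Hc Ha Hb.
  apply Rle_trans with (2 * Rmin (f (a / 2)) c); [now apply cap_halving|].
  apply Rmult_le_compat_l; [lra|]. apply cap_monotone; auto; lra.
Qed.

Lemma cap_nonneg (f : R -> R) (c x : R) : 0 <= f x -> 0 <= c -> 0 <= Rmin (f x) c.
Proof. intros; now apply Rmin_glb. Qed.

Definition halve_shift (r j : nat) (y : nat -> R) (i : nat) : R :=
  if Nat.eqb i r then 0 else if Nat.eqb i j then (y j + y r) / 2 else y i / 2.

Section HalveShift.
Variables (n r j : nat) (y : nat -> R).
Hypotheses (Hr : (r < n)%nat) (Hj : (j < n)%nat) (Hjr : j <> r)
           (Hy : nonneg_alloc n y) (Hsum : sumR n y = 1).

Lemma halve_shift_nonneg : nonneg_alloc n (halve_shift r j y).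
Proof.
  intros i Hi. unfold halve_shift.
  pose proof (Hy i Hi). pose proof (Hy j Hj). pose proof (Hy r Hr).
  destruct (Nat.eqb i r); [lra|]. destruct (Nat.eqb i j); lra.
Qed.

Lemma halve_shift_sum :
  sumR n (fun i => if Nat.eqb i r then 0 else halve_shift r j y i) = 1 / 2.
Proof.
  rewrite (sumR_ext n _ (fun i => 1 / 2 * y i
             + ((if Nat.eqb i j then y r / 2 else 0)
                + -1 * (if Nat.eqb i r then y r / 2 else 0)))).
  - rewrite sumR_plus, sumR_scal, sumR_plus, sumR_scal, !sumR_indicator by assumption.
    rewrite Hsum. lra.
  - intros i Hi. unfold halve_shift.
    destruct (Nat.eqb_spec i r), (Nat.eqb_spec i j); subst; try lia; lra.
Qed.

Lemma halve_shift_admissible (v : nat -> R -> R) (B : nat -> R) :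
  Wdagger_set n v B r (Wbar n v B (halve_shift r j y)).
Proof.
  exists (halve_shift r j y). repeat split.
  - exact halve_shift_nonneg.
  - unfold halve_shift. now rewrite Nat.eqb_refl.
  - exact halve_shift_sum.
Qed.

Lemma halve_shift_lower (i : nat) : i <> r -> y i / 2 <= halve_shift r j y i.
Proof.
  intros Hir. unfold halve_shift. pose proof (Hy r Hr).
  destruct (Nat.eqb_spec i r); [lia|]. destruct (Nat.eqb_spec i j); subst; lra.
Qed.

Lemma halve_shift_le_half (i : nat) : (i < n)%nat -> i <> r -> halve_shift r j y i <= 1 / 2.
Proof.
  intros Hi Hir. rewrite <- halve_shift_sum.
  replace (halve_shift r j y i)
    with ((fun k => if Nat.eqb k r then 0 else halve_shift r j y k) i)
    by (simpl; destruct (Nat.eqb_spec i r); [lia | reflexivity]).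
  apply (sumR_term_le n i (fun k => if Nat.eqb k r then 0 else halve_shift r j y k));
    [|exact Hi].
  intros k Hk. destruct (Nat.eqb k r); [lra | now apply halve_shift_nonneg].
Qed.

End HalveShift.

Lemma welfare_halve_shift (n : nat) (v : nat -> R -> R) (B : nat -> R) (r j : nat)
  (y : nat -> R)
  (hv_nonneg : forall i, (i < n)%nat -> forall x, 0 <= x <= 1 -> 0 <= v i x)
  (hv_mono : forall i, (i < n)%nat -> monotone01 (v i))
  (hv_sub : forall i, (i < n)%nat -> subadditive01 (v i))
  (hB : forall i, (i < n)%nat -> 0 < B i)
  (Hr : (r < n)%nat) (Hj : (j < n)%nat) (Hjr : j <> r)
  (Hy : nonneg_alloc n y) (Hsum : sumR n y = 1) :
  Wbar n v B y <= 2 * (vbar v B r (1 / 2) + Wbar n v B (halve_shift r j y)).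
Proof.
  set (z := halve_shift r j y).
  assert (Hy1 : forall i, (i < n)%nat -> y i <= 1)
    by (intros i Hi; rewrite <- Hsum; now apply sumR_term_le).
  assert (Hdouble : forall i b, (i < n)%nat -> y i / 2 <= b <= 1 ->
            vbar v B i (y i) <= 2 * vbar v B i b).
  { intros i b Hi Hb. unfold vbar. apply cap_double_bound.
    - exact (hv_mono i Hi).
    - exact (hv_sub i Hi).
    - exact (Rlt_le _ _ (hB i Hi)).
    - split; [apply Hy | apply Hy1]; exact Hi.
    - exact Hb. }
  assert (Hown : vbar v B r (y r) <= 2 * vbar v B r (1 / 2))
    by (apply Hdouble; [exact Hr | pose proof (Hy1 r Hr); lra]).
  assert (Hothers :
      sumR n (fun i => if Nat.eqb i r then 0 else vbar v B i (y i)) <=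
      2 * sumR n (fun i => if Nat.eqb i r then 0 else vbar v B i (z i))).
  { rewrite <- sumR_scal. apply sumR_le. intros i Hi.
    destruct (Nat.eqb_spec i r) as [_ | Hir]; [lra|].
    apply Hdouble; [exact Hi | split].
    - exact (halve_shift_lower n r j y Hr Hj Hjr Hy i Hir).
    - pose proof (halve_shift_le_half n r j y Hr Hj Hjr Hy Hsum i Hi Hir). unfold z. lra. }
  assert (Hz_r : 0 <= vbar v B r (z r)).
  { apply cap_nonneg; [apply hv_nonneg; [exact Hr|] | now apply Rlt_le, hB].
    unfold z, halve_shift. rewrite Nat.eqb_refl. lra. }
  unfold Wbar. rewrite (sumR_split n r _ Hr), (sumR_split n r (fun i => vbar v B i (z i)) Hr).
  lra.
Qed.

Lemma other_agent_exists (n : nat) (v : nat -> R -> R) (B : nat -> R) (r : nat) (Wd : R) :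
  is_lub (Wdagger_set n v B r) Wd -> exists j, (j < n)%nat /\ j <> r.
Proof.
  intros [_ Hleast].
  destruct (Classical_Prop.classic (exists w, Wdagger_set n v B r w))
    as [[w [y [_ [_ [Hs _]]]]] | Hempty].
  - destruct (sumR_nonzero_term n _ ltac:(rewrite Hs; lra)) as [j [Hj Hnz]].
    exists j. split; [exact Hj|]. intros ->. rewrite Nat.eqb_refl in Hnz. lra.
  - exfalso.
    assert (Wd <= Wd - 1); [|lra].
    apply Hleast. intros w Hw. exfalso. apply Hempty. now exists w.
Qed.

Theorem mainTheorem15 (n : nat) (v : nat -> R -> R) (B : nat -> R) (r1 : nat)
  (Wstar Wdagger : R)
  (hv_nonneg : forall i, (i < n)%nat -> forall x, 0 <= x <= 1 -> 0 <= v i x)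
  (hv_mono : forall i, (i < n)%nat -> monotone01 (v i))
  (hv_sub : forall i, (i < n)%nat -> subadditive01 (v i))
  (hB : forall i, (i < n)%nat -> 0 < B i)
  (hr1 : (r1 < n)%nat)
  (hr1max : forall i, (i < n)%nat -> vbar v B i (1/2) <= vbar v B r1 (1/2))
  (hWstar : is_lub (Wstar_set n v B) Wstar)
  (hWdagger : is_lub (Wdagger_set n v B r1) Wdagger) :
  vbar v B r1 (1/2) + Wdagger >= 1/2 * Wstar.
Proof.
  destruct (other_agent_exists n v B r1 Wdagger hWdagger) as [j [Hj Hjr]].
  enough (Wstar <= 2 * (vbar v B r1 (1/2) + Wdagger)) by lra.
  apply (proj2 hWstar). intros w [y [Hy [Hsum ->]]].
  pose proof (welfare_halve_shift n v B r1 j y hv_nonneg hv_mono hv_sub hB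
                hr1 Hj Hjr Hy Hsum).
  pose proof (proj1 hWdagger _ (halve_shift_admissible n r1 j y hr1 Hj Hjr Hy Hsum v B)).
  lra.
Qed.
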